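(* Let $\mathcal A$ be a topological algebra with hypocontinuous multiplication such that $\Omega(\mathcal A)$ separates the points of $\mathcal A^{**}$. Then every $\sigma(\mathcal A^{**},\mathcal A^* )$-cluster point in $\mathcal A^{**}$ of the set of idempotents of $J(\mathcal A)$ is again an idempotent with respect to both Arens products, i.e. if $a_i\in\mathcal A$ with $a_i^2=a_i$ and $J(a_i)\to u$ in $\sigma(\mathcal A^{**},\mathcal A^* )$, then $u\square u=u$ and $u\diamond u=u$.
   Context: $\Omega(\mathcal A)\subseteq\mathcal A^*$ denotes the set of continuous nonzero multiplicative linear functionals on $\mathcal A$; ''separates points of $\mathcal A^{**}$'' means for $u\ne v$ in $\mathcal A^{**}$ there is $f\in\Omega(\mathcal A)$ with $u(f)\ne v(f)$. $\mathcal A^*,\mathcal A^{**}$ carry strong dual topologies and $J:\mathcal A\to\mathcal A^{**}$ is the evaluation map. Multiplication is hypocontinuous: for every bounded $B\subseteq\mathcal A$ and $0$-neighbourhood $W$ there is a $0$-neighbourhood $V$ with $BV\subseteq W$ and $VB\subseteq W$. Arens products: for $f\in\mathcal A^*$, $a,b\in\mathcal A$, $f_a(b)=f(ab)$, ${}_af(b)=f(ba)$; for $u\in\mathcal A^{**}$, $f_u(b)=u({}_bf)$, ${}_uf(b)=u(f_b)$; $(u\square v)(f)=u({}_vf)$, $(u\diamond v)(f)=v(f_u)$. *)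

From HB Require Import structures.
From mathcomp Require Import all_boot all_order all_algebra.
From mathcomp Require Import all_classical all_reals all_analysis.
Set Implicit Arguments. Unset Strict Implicit. Unset Printing Implicit Defensive.
Import Order.TTheory GRing.Theory Num.Theory.
Import numFieldNormedType.Exports.
Local Open Scope classical_set_scope.
Local Open Scope ring_scope.

Section TopAlg.
Variables (K : numFieldType) (A : topologicalLmodType K).

Definition lin_functional (f : A -> K) : Prop :=
  forall (k : K) (a b : A), f (k *: a + b) = k * f a + f b.

Definition dual : set (A -> K) := [set f | lin_functional f /\ continuous f].

Definition tvs_bounded (B : set A) : Prop :=
  forall W : set A, nbhs 0 W ->
    exists r : K, 0 < r /\
      forall k : K, r <= `|k| -> B `<=` [set k *: w | w in W].

Definition bilinear_assoc (mul : A -> A -> A) : Prop :=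
  [/\ forall a b c, mul a (mul b c) = mul (mul a b) c,
      forall (k : K) a b c, mul (k *: a + b) c = k *: mul a c + mul b c
    & forall (k : K) a b c, mul c (k *: a + b) = k *: mul c a + mul c b].

Definition hypocontinuous (mul : A -> A -> A) : Prop :=
  forall B : set A, tvs_bounded B ->
  forall W : set A, nbhs 0 W ->
    exists V : set A, nbhs 0 V /\
      (forall b v, B b -> V v -> W (mul b v) /\ W (mul v b)).

(* Continuity of u : A^* -> K for the strong topology on A^* (topology of
   uniform convergence on bounded subsets of A), written out with the basis
   of neighbourhoods {f in A^* | forall a in B, |f a - f0 a| < d}. *)
Definition strong_continuous (u : (A -> K) -> K) : Prop :=
  forall f0, dual f0 -> forall e : K, 0 < e ->
    exists (B : set A) (d : K), [/\ tvs_bounded B, 0 < d &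
      forall f, dual f -> (forall a, B a -> `|f a - f0 a| < d) ->
        `|u f - u f0| < e].

(* A^** : strongly continuous linear functionals on A^*.  Elements are
   represented by functions (A -> K) -> K, only their values on A^* matter. *)
Definition bidual : set ((A -> K) -> K) :=
  [set u | (forall (k : K) f g, dual f -> dual g ->
             u (fun a => k * f a + g a) = k * u f + u g)
           /\ strong_continuous u].

Definition Jev (a : A) : (A -> K) -> K := fun f => f a.

Definition Omega (mul : A -> A -> A) : set (A -> K) :=
  [set f | dual f /\ (exists a, f a != 0) /\
           forall a b, f (mul a b) = f a * f b].

Definition separates_bidual (mul : A -> A -> A) : Prop :=
  forall u v, bidual u -> bidual v ->
    (exists g, dual g /\ u g != v g) ->
    exists f, Omega mul f /\ u f != v f.

(* Arens products:
   f_a(b) = f(ab), _a f(b) = f(ba), f_u(b) = u(_b f), _u f(b) = u(f_b),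
   (u [] v)(f) = u(_v f), (u <> v)(f) = v(f_u). *)
Definition arens_first (mul : A -> A -> A) (u v : (A -> K) -> K) :
  (A -> K) -> K :=
  fun f => u (fun b => v (fun c => f (mul b c))).

Definition arens_second (mul : A -> A -> A) (u v : (A -> K) -> K) :
  (A -> K) -> K :=
  fun f => v (fun b => u (fun c => f (mul c b))).

End TopAlg.

From HB Require Import structures.
From mathcomp Require Import all_boot all_order all_algebra.
From mathcomp Require Import all_classical all_reals all_analysis.
Import Order.TTheory GRing.Theory Num.Theory.
Import numFieldNormedType.Exports.
Local Open Scope classical_set_scope.
Local Open Scope ring_scope.
Set Implicit Arguments. Unset Strict Implicit.

(* Both Arens products of u with itself are again in A^** (hypocontinuity
   makes products of bounded sets bounded, which transfers strong continuity
   from u to u ◻ u), and on a character h in Omega(A) each of them takes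
   the value u(h)^2.  Since h is
   multiplicative, h(a_i) = h(a_i^2) = h(a_i)^2, so the limit u(h) of the net
   h(a_i) also satisfies u(h)^2 = u(h).  Hence u ◻ u, u ◇ u and u agree on
   Omega(A), which separates the points of A^**. *)

Section Functionals.
Variables (K : numFieldType) (A : topologicalLmodType K).

Lemma lin_functional0 (f : A -> K) : lin_functional f -> f 0 = 0.
Proof.
move=> lf; have := lf 1 0 0; rewrite scale1r addr0 mul1r => f00.
by apply: (addrI (f 0)); rewrite addr0 -f00.
Qed.

Lemma lin_functionalD (f : A -> K) a b :
  lin_functional f -> f (a + b) = f a + f b.
Proof. by move=> lf; rewrite -[a in LHS]scale1r lf mul1r. Qed.

Lemma dual_cst0 : dual (fun _ : A => 0 : K).
Proof. by split; [move=> *; rewrite mulr0 addr0 | exact: cst_continuous]. Qed.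

Lemma dual_comb (f g : A -> K) k :
  dual f -> dual g -> dual (fun a => k * f a + g a).
Proof.
move=> [lf cf] [lg cg]; split.
  move=> l a b; rewrite lf lg mulrDr !mulrA (mulrC k l).
  by rewrite addrACA mulrDr mulrA.
by move=> x; apply: cvgD; [exact: cvgMl_tmp (cf x) | exact: cg].
Qed.

Lemma dual_nbhs0 (f : A -> K) e :
  dual f -> 0 < e -> nbhs (0 : A) [set w | `|f w| < e].
Proof.
move=> [lf cf] e0; have /cvgrPdist_lt /(_ e e0) := cf 0.
by apply: filterS => w /=; rewrite lin_functional0 // sub0r normrN.
Qed.

Lemma lin_functional_continuous (g : A -> K) :
  lin_functional g ->
  (forall e, 0 < e -> nbhs (0 : A) [set w | `|g w| < e]) -> continuous g.
Proof.
move=> lg g0 x; apply/cvgrPdist_lt => e e0.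
apply: filterS (nbhsT_subproof add_continuous x (g0 e e0)) => _ [w gw <-] /=.
by rewrite lin_functionalD // opprD addNKr normrN.
Qed.

Lemma tvs_bounded_set1 (b : A) : tvs_bounded [set b].
Proof.
move=> W W0.
have W0b : nbhs ((0 : K^o) *: b) W by rewrite scale0r.
have [[P Q] /= [/nbhs_norm0P [d /= d0 Pd] Qb] PQW] :=
  @scale_continuous K A ((0 : K^o), b) W W0b.
exists (2 / d); split => [|k hk _ ->]; first by rewrite divr_gt0.
have k0 : 0 < `|k| by apply: lt_le_trans hk; rewrite divr_gt0.
exists (k^-1 *: b); last by rewrite scalerA mulfV ?scale1r // -normr_gt0.
apply: (PQW (k^-1, b)); split; last exact: nbhs_singleton.
apply: Pd => /=; rewrite normfV -[_^-1]mul1r ltr_pdivrMr //.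
have : d * (2 / d) <= d * `|k| by rewrite ler_wpM2l // ltW.
by rewrite mulrCA mulfV ?gt_eqF // mulr1; apply: lt_le_trans; rewrite ltr1n.
Qed.

Lemma bidual_cst0 (v : (A -> K) -> K) : bidual v -> v (fun _ => 0) = 0.
Proof.
move=> [lv _]; have := lv 1 _ _ dual_cst0 dual_cst0.
under [fun _ => _]funext => a do rewrite mul1r addr0.
by rewrite mul1r => /eqP; rewrite -subr_eq subrr eq_sym => /eqP.
Qed.

Lemma bidualZ (v : (A -> K) -> K) (f : A -> K) k :
  bidual v -> dual f -> v (fun a => k * f a) = k * v f.
Proof.
move=> bv df; have [lv _] := bv.
have := lv k f _ df dual_cst0; rewrite bidual_cst0 // addr0 => <-.
by congr v; apply: funext => a; rewrite addr0.
Qed.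

End Functionals.

Section ArensProducts.
Variables (K : numFieldType) (A : topologicalLmodType K) (mul : A -> A -> A).
Hypothesis mulDl : forall k a b c, mul (k *: a + b) c = k *: mul a c + mul b c.
Hypothesis mulDr : forall k a b c, mul c (k *: a + b) = k *: mul c a + mul c b.
Hypothesis mul_hypo : hypocontinuous mul.

Lemma mulx0 c : mul c 0 = 0.
Proof.
have := mulDr 1 0 0 c; rewrite !scale1r addr0 => c00.
by apply: (addrI (mul c 0)); rewrite addr0 -c00.
Qed.

Lemma mulxZ k a c : mul c (k *: a) = k *: mul c a.
Proof. by rewrite -[k *: a]addr0 mulDr mulx0 addr0. Qed.

Lemma tvs_bounded_mul (B1 B2 : set A) :
  tvs_bounded B1 -> tvs_bounded B2 ->
  tvs_bounded [set mul b c | b in B1 & c in B2].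
Proof.
move=> bB1 bB2 W W0.
have [V [V0 B1V]] := mul_hypo bB1 W0.
have [r [r0 B2rV]] := bB2 V V0.
exists r; split => // k kr _ [b B1b [c B2c <-]].
have [w Vw <-] := B2rV k kr c B2c.
by exists (mul b w); [exact: (B1V b w B1b Vw).1 | rewrite mulxZ].
Qed.

Lemma dual_mull (f : A -> K) b : dual f -> dual (fun c => f (mul b c)).
Proof.
move=> df; have [lf _] := df.
have lfb : lin_functional (fun c => f (mul b c)) by move=> k x y; rewrite mulDr lf.
split => //; apply: lin_functional_continuous => // e e0.
have [V [V0 bV]] := mul_hypo (tvs_bounded_set1 b) (dual_nbhs0 df e0).
by apply: filterS V0 => w Vw; exact: (bV b w erefl Vw).1.
Qed.

(* The functional ${}_v f$ of the paper, so that (u ◻ v)(f) = u(${}_v f$). *)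
Definition lact (v : (A -> K) -> K) (f : A -> K) : A -> K :=
  fun b => v (fun c => f (mul b c)).

Lemma dual_lact (v : (A -> K) -> K) (f : A -> K) :
  bidual v -> dual f -> dual (lact v f).
Proof.
move=> bv df; have [lf _] := df; have [lv sv] := bv.
have lvf : lin_functional (lact v f).
  move=> k x y; rewrite /lact -(lv _ _ _ (dual_mull x df) (dual_mull y df)).
  by congr v; apply: funext => c; rewrite mulDl lf.
split => //; apply: lin_functional_continuous => // e e0.
have [B [d [bB d0 Bd]]] := sv _ (dual_cst0 A) e e0.
have [V [V0 BV]] := mul_hypo bB (dual_nbhs0 df d0).
apply: filterS V0 => b Vb /=.
have := Bd _ (dual_mull b df); rewrite bidual_cst0 // subr0; apply => c Bc.
by rewrite subr0; exact: (BV c b Bc Vb).2.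
Qed.

Lemma bidual_arens_first (u v : (A -> K) -> K) :
  bidual u -> bidual v -> bidual (arens_first mul u v).
Proof.
move=> bu bv; have [lu su] := bu; have [lv sv] := bv.
split.
  move=> k f g df dg; rewrite /arens_first.
  rewrite -(lu _ _ _ (dual_lact bv df) (dual_lact bv dg)); congr u.
  by apply: funext => b; rewrite /lact (lv _ _ _ (dual_mull b df) (dual_mull b dg)).
move=> f0 df0 e e0.
have [B1 [d1 [bB1 d10 B1d1]]] := su _ (dual_lact bv df0) e e0.
have [B2 [d2 [bB2 d20 B2d2]]] := sv _ (dual_cst0 A) d1 d10.
exists [set mul b c | b in B1 & c in B2], d2.
split => //; first exact: tvs_bounded_mul.
move=> f df fB; apply: (B1d1 _ (dual_lact bv df)) => b B1b.
pose g c := (-1) * f0 (mul b c) + f (mul b c).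
have dg : dual g by apply: dual_comb; exact: dual_mull.
have -> : lact v f b - lact v f0 b = v g.
  by rewrite /g (lv _ _ _ (dual_mull b df0) (dual_mull b df)) mulN1r addrC.
have := B2d2 g dg; rewrite bidual_cst0 // subr0; apply => c B2c.
by rewrite subr0 /g mulN1r addrC; apply: fB; exists b => //; exists c.
Qed.

End ArensProducts.

Section ArensCharacters.
Variables (K : numFieldType) (A : topologicalLmodType K).

Lemma arens_secondE (mul : A -> A -> A) (u v : (A -> K) -> K) :
  arens_second mul u v = arens_first (fun x y => mul y x) v u.
Proof. by []. Qed.

Lemma hypocontinuous_flip (mul : A -> A -> A) :
  hypocontinuous mul -> hypocontinuous (fun x y => mul y x).
Proof.
move=> hy B bB W W0; have [V [V0 BV]] := hy B bB W W0.
by exists V; split => // b v Bb Vv; have [? ?] := BV b v Bb Vv.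
Qed.

Lemma bidual_arens_second (mul : A -> A -> A) (u v : (A -> K) -> K) :
  bilinear_assoc mul -> hypocontinuous mul ->
  bidual u -> bidual v -> bidual (arens_second mul u v).
Proof.
move=> [_ mulDl mulDr] hy bu bv; rewrite arens_secondE.
by apply: bidual_arens_first => //; exact: hypocontinuous_flip.
Qed.

Lemma Omega_flip (mul : A -> A -> A) (h : A -> K) : Omega mul h -> Omega (fun x y => mul y x) h.
Proof. by move=> [dh [h_neq0 hM]]; split=> //; split=> // a b; rewrite hM mulrC. Qed.

Lemma arens_first_Omega (mul : A -> A -> A) (u v : (A -> K) -> K) (h : A -> K) :
  bidual u -> bidual v -> Omega mul h -> arens_first mul u v h = u h * v h.
Proof.
move=> bu bv [dh [_ hM]]; rewrite /arens_first.
have -> : (fun b => v (fun c => h (mul b c))) = (fun b => v h * h b).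
  apply: funext => b; rewrite mulrC -bidualZ //; congr v.
  by apply: funext => c; rewrite hM.
by rewrite bidualZ // mulrC.
Qed.

Lemma arens_second_Omega (mul : A -> A -> A) (u v : (A -> K) -> K) (h : A -> K) :
  bidual u -> bidual v -> Omega mul h -> arens_second mul u v h = u h * v h.
Proof.
move=> bu bv Oh; rewrite arens_secondE arens_first_Omega 1?mulrC //.
exact: Omega_flip.
Qed.

Lemma bidual_eq_Omega (mul : A -> A -> A) (u v : (A -> K) -> K) :
  separates_bidual mul -> bidual u -> bidual v ->
  (forall h, Omega mul h -> u h = v h) -> forall f, dual f -> u f = v f.
Proof.
move=> sep bu bv uv f df; apply/eqP/negP => /negP uvf.
have [h [Oh /eqP]] := sep u v bu bv (ex_intro _ f (conj df uvf)).
by rewrite uv.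
Qed.

Lemma Omega_idempotent_limit (mul : A -> A -> A) (I : Type) (F : set_system I) (a : I -> A)
    (h : A -> K) (l : K) :
  ProperFilter F -> (forall i, mul (a i) (a i) = a i) -> Omega mul h ->
  (fun i => h (a i)) @ F --> l -> l * l = l.
Proof.
move=> PF aa [_ [_ hM]] hal.
have ha2 : (fun i => h (a i) * h (a i)) = (fun i => h (a i)).
  by apply: funext => i; rewrite -hM aa.
have := cvgM hal hal; rewrite /GRing.mul_fun /= ha2 => /(_ (@filter_filter _ _ PF)) hal2.
exact: (@cvg_unique _ (@norm_hausdorff K K) _ _ _ _ hal2 hal).
Qed.

End ArensCharacters.

Theorem mainTheorem14 (K : numFieldType) (A : topologicalLmodType K)
  (mul : A -> A -> A) :
  bilinear_assoc mul -> hypocontinuous mul -> separates_bidual mul ->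
  forall (I : Type) (F : set_system I), ProperFilter F ->
  forall (a : I -> A) (u : (A -> K) -> K),
    (forall i, mul (a i) (a i) = a i) ->
    bidual u ->
    (forall f, dual f -> (fun i => Jev (a i) f) @ F --> u f) ->
    forall f, dual f ->
      arens_first mul u u f = u f /\ arens_second mul u u f = u f.
Proof.
move=> mul_bilin mul_hypo sep I F PF a u aa bu au f df.
have [_ mulDl mulDr] := mul_bilin.
have u_idem h : Omega mul h -> u h * u h = u h.
  by move=> Oh; apply: Omega_idempotent_limit PF aa Oh (au h Oh.1).
split; apply: (bidual_eq_Omega sep _ bu _ df).
- exact: bidual_arens_first.
- by move=> h Oh; rewrite arens_first_Omega // u_idem.
- exact: bidual_arens_second.
- by move=> h Oh; rewrite arens_second_Omega // u_idem.
Qed.
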